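(* Let $A\subset\mathbb{N}\setminus\{1\}$. If $L(A)$ is lineable, then there exists an integer $k\ge1$ such that $A\cap(A-k)$ is infinite, where $A-k=\{a-k: a\in A\}$.
   Context: $\ell^\infty$ is the space of bounded real sequences with the sup norm. For $x\in\ell^\infty$, $L_x$ denotes the set of accumulation points (subsequential limits) of $x$. For a set $A$ of cardinalities, $L(A)=\{x\in\ell^\infty: |L_x|\in A\}$. A subset $Y$ of a vector space is lineable if $Y\cup\{0\}$ contains an infinite-dimensional linear subspace. *)

From Stdlib Require Import Reals List.
Open Scope R_scope.

Definition bounded_seq (x : nat -> R) : Prop :=
  exists M : R, forall n : nat, Rabs (x n) <= M.

Definition accumulation_point (x : nat -> R) (l : R) : Prop :=
  exists phi : nat -> nat,
    (forall n : nat, (phi n < phi (S n))%nat) /\ Un_cv (fun n => x (phi n)) l.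

Definition set_card_eq (S : R -> Prop) (m : nat) : Prop :=
  exists l : list R, NoDup l /\ length l = m /\ (forall r : R, S r <-> In r l).

Definition L_of (A : nat -> Prop) (x : nat -> R) : Prop :=
  bounded_seq x /\ exists m : nat, A m /\ set_card_eq (accumulation_point x) m.

Definition zero_seq : nat -> R := fun _ => 0.

Definition linear_subspace (V : (nat -> R) -> Prop) : Prop :=
  V zero_seq /\
  (forall x y, V x -> V y -> V (fun n => x n + y n)) /\
  (forall (c : R) x, V x -> V (fun n => c * x n)).

Definition lin_indep (m : nat) (f : nat -> nat -> R) : Prop :=
  forall c : nat -> R,
    (forall n : nat, sum_f_R0 (fun i => c i * f i n) (pred m) = 0) ->
    forall i : nat, (i < m)%nat -> c i = 0.

Definition infinite_dimensional (V : (nat -> R) -> Prop) : Prop :=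
  forall m : nat, exists f : nat -> nat -> R,
    (forall i : nat, (i < m)%nat -> V (f i)) /\ lin_indep m f.

Definition lineable (Y : (nat -> R) -> Prop) : Prop :=
  exists V : (nat -> R) -> Prop,
    linear_subspace V /\ infinite_dimensional V /\
    (forall x, V x -> Y x \/ x = zero_seq).

(* Let V be an infinite-dimensional subspace inside L(A) u {0}.  Every nonzero x in V has
   finitely many, and at least two, accumulation points.  For x, y in V the pairs (a, b)
   of joint cluster points form a finite planar set s, and the cluster points of x + t y
   are the projections a + t b of s.
   1. Counting projections of s: a generic t is injective on s, while the largest slope
      of s identifies points but loses at most as many as there are rows of s.
   2. Linear algebra: a homogeneous system with more unknowns than equations has a
      nontrivial solution.
   3. Combining both, V contains elements with arbitrarily many cluster points: an
      element w with a maximal number of them would make every element of V an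
      asymptotic function of w, which forces V to be finite-dimensional.
   4. With u in V having p cluster points and w with many, step 1 yields two elements of
      V whose cardinalities k2 < k1 <= k2 + p lie in A; a pigeonhole on the gap k1 - k2
      finishes the proof. *)

From Stdlib Require Import Reals List Lra Lia Classical ClassicalEpsilon Rtopology RList.
Open Scope R_scope.

(* Subsequences are taken along index maps phi with k <= phi k; this is all the
   extraction lemmas need, and strictly increasing maps are a special case. *)
Definition escaping (phi : nat -> nat) : Prop := forall k, (k <= phi k)%nat.

Lemma escaping_comp (phi psi : nat -> nat) :
  escaping phi -> escaping psi -> escaping (fun k => phi (psi k)).
Proof. intros Hphi Hpsi k. specialize (Hpsi k). specialize (Hphi (psi k)). lia. Qed.

Lemma increasing_escaping (phi : nat -> nat) :
  (forall n, (phi n < phi (S n))%nat) -> escaping phi.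
Proof. intros H n. induction n as [|n IH]; [lia|]. specialize (H n). lia. Qed.

Lemma choose_escaping (P : nat -> nat -> Prop) :
  (forall k, exists n, (k <= n)%nat /\ P k n) ->
  exists phi, escaping phi /\ forall k, P k (phi k).
Proof.
  intros H. destruct (choice (fun k n => (k <= n)%nat /\ P k n) H) as [phi Hphi].
  exists phi. split; intros k; apply Hphi.
Qed.

Lemma Un_cv_escaping (u : nat -> R) (l : R) (phi : nat -> nat) :
  Un_cv u l -> escaping phi -> Un_cv (fun k => u (phi k)) l.
Proof.
  intros Hu Hphi eps Heps. destruct (Hu eps Heps) as [N HN].
  exists N. intros k Hk. apply HN. specialize (Hphi k). lia.
Qed.

Lemma Un_cv_const (c : R) : Un_cv (fun _ => c) c.
Proof. intros eps Heps. exists 0%nat. intros n _. unfold Rdist. rewrite Rminus_diag, Rabs_R0. lra. Qed.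

Lemma Un_cv_inv_bound (u : nat -> R) (l : R) :
  (forall k, Rabs (u k - l) < / (INR k + 1)) -> Un_cv u l.
Proof.
  intros Hu eps Heps. destruct (archimed_cor1 eps Heps) as [N [HN HN0]].
  exists N. intros k Hk. unfold Rdist. apply Rlt_trans with (/ (INR k + 1)); [apply Hu|].
  apply Rle_lt_trans with (/ INR N); [|exact HN].
  apply Rinv_le_contravar; [apply lt_0_INR; lia|]. apply le_INR in Hk. lra.
Qed.

Lemma bounded_seq_comp (x : nat -> R) (phi : nat -> nat) :
  bounded_seq x -> bounded_seq (fun k => x (phi k)).
Proof. intros [M HM]. exists M. intros k. apply HM. Qed.

Lemma bolzano_weierstrass (u : nat -> R) :
  bounded_seq u -> exists a psi, escaping psi /\ Un_cv (fun k => u (psi k)) a.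
Proof.
  intros [M HM].
  destruct (Bolzano_Weierstrass u (fun c => -M <= c <= M) (compact_P3 (-M) M)) as [a Ha].
  { intros n. specialize (HM n). unfold Rabs in HM. destruct (Rcase_abs (u n)); lra. }
  assert (Hclose : forall k, exists n, (k <= n)%nat /\ Rabs (u n - a) < / (INR k + 1)).
  { intros k. assert (Hpos : 0 < / (INR k + 1)).
    { apply Rinv_0_lt_compat. pose proof (pos_INR k). lra. }
    apply (Ha (disc a (mkposreal _ Hpos)) k).
    exists (mkposreal _ Hpos). intros z Hz. exact Hz. }
  destruct (choose_escaping _ Hclose) as [psi [Hpsi Hu]].
  exists a, psi. split; [exact Hpsi|]. apply Un_cv_inv_bound. exact Hu.
Qed.

Definition cluster (x : nat -> R) (a : R) : Prop :=
  exists phi, escaping phi /\ Un_cv (fun k => x (phi k)) a.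

Definition cluster2 (x y : nat -> R) (a b : R) : Prop :=
  exists phi, escaping phi /\ Un_cv (fun k => x (phi k)) a /\ Un_cv (fun k => y (phi k)) b.

(* [cluster] agrees with the accumulation points of the statement: an escaping index map
   can always be thinned out to a strictly increasing one. *)
Lemma accumulation_point_cluster (x : nat -> R) (a : R) :
  accumulation_point x a <-> cluster x a.
Proof.
  split.
  - intros [phi [Hinc Hcv]]. exists phi. split; [apply increasing_escaping|]; assumption.
  - intros [phi [Hphi Hcv]].
    set (g := fix g k := match k with O => O | S k' => S (phi (g k')) end).
    assert (Hg : escaping g).
    { intros k. induction k as [|k IH]; simpl; [lia|]. specialize (Hphi (g k)). lia. }
    exists (fun k => phi (g k)). split.
    + intros k. simpl. specialize (Hphi (S (phi (g k)))). lia.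
    + exact (Un_cv_escaping _ _ _ Hcv Hg).
Qed.

Lemma cluster_exists (x : nat -> R) : bounded_seq x -> exists a, cluster x a.
Proof.
  intros Bx. destruct (bolzano_weierstrass x Bx) as [a [psi Hpsi]]. exists a, psi. exact Hpsi.
Qed.

Lemma cluster2_l x y a b : cluster2 x y a b -> cluster x a.
Proof. intros [phi [Hphi [Hx _]]]. exists phi. auto. Qed.

Lemma cluster2_r x y a b : cluster2 x y a b -> cluster y b.
Proof. intros [phi [Hphi [_ Hy]]]. exists phi. auto. Qed.

Lemma cluster2_sym x y a b : cluster2 x y a b -> cluster2 y x b a.
Proof. intros [phi [Hphi [Hx Hy]]]. exists phi. auto. Qed.

Lemma cluster2_extend x y a : bounded_seq y -> cluster x a -> exists b, cluster2 x y a b.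
Proof.
  intros By [phi [Hphi Hx]].
  destruct (bolzano_weierstrass _ (bounded_seq_comp y phi By)) as [b [psi [Hpsi Hy]]].
  exists b, (fun k => phi (psi k)). split; [apply escaping_comp; assumption|].
  split; [exact (Un_cv_escaping _ _ _ Hx Hpsi)|exact Hy].
Qed.

Lemma cluster_zero_seq a : cluster zero_seq a -> a = 0.
Proof. intros [phi [_ Hcv]]. exact (UL_sequence _ _ _ Hcv (Un_cv_const 0)). Qed.

Definition comb (x y : nat -> R) (t : R) : nat -> R := fun n => x n + t * y n.

Lemma Un_cv_comb x y t a b :
  Un_cv x a -> Un_cv y b -> Un_cv (comb x y t) (a + t * b).
Proof. intros Hx Hy. apply CV_plus; [exact Hx|]. apply CV_mult; [apply Un_cv_const|exact Hy]. Qed.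

Lemma cluster_comb x y t c : bounded_seq x -> bounded_seq y ->
  (cluster (comb x y t) c <-> exists a b, cluster2 x y a b /\ c = a + t * b).
Proof.
  intros Bx By. split.
  - intros [phi [Hphi Hz]].
    destruct (bolzano_weierstrass _ (bounded_seq_comp x phi Bx)) as [a [psi [Hpsi Hx]]].
    destruct (cluster2_extend (fun k => x (phi k)) (fun k => y (phi k)) a
                (bounded_seq_comp y phi By)) as [b [chi [Hchi [Hxa Hyb]]]].
    { exists psi. auto. }
    exists a, b. split.
    + exists (fun k => phi (chi k)). split; [apply escaping_comp; assumption|auto].
    + apply (UL_sequence (fun k => comb x y t (phi (chi k)))).
      * exact (Un_cv_escaping _ _ _ Hz Hchi).
      * exact (Un_cv_comb _ _ t _ _ Hxa Hyb).
  - intros [a [b [[phi [Hphi [Hx Hy]]] ->]]].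
    exists phi. split; [exact Hphi|]. exact (Un_cv_comb _ _ t _ _ Hx Hy).
Qed.

Definition follows (w y : nat -> R) (a b : R) : Prop :=
  forall phi, escaping phi -> Un_cv (fun k => w (phi k)) a -> Un_cv (fun k => y (phi k)) b.

(* If (a, b) is the only cluster point of (w, y) above a, then y follows w from a to b:
   otherwise a subsequence with w -> a and y far from b would produce a second one. *)
Lemma unique_companion_follows (w y : nat -> R) (a b : R) :
  bounded_seq y -> (forall b', cluster2 w y a b' -> b' = b) -> follows w y a b.
Proof.
  intros By Hunique phi Hphi Hw. apply NNPP. intros Hnot.
  assert (Hfar : exists eps, eps > 0 /\ forall N, exists k, (N <= k)%nat /\ ~ Rdist (y (phi k)) b < eps).
  { apply NNPP. intros Hno. apply Hnot. intros eps Heps. apply NNPP. intros HN. apply Hno.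
    exists eps. split; [exact Heps|]. intros N. apply NNPP. intros Hk. apply HN.
    exists N. intros k Hk'. apply NNPP. intros Hd. apply Hk. exists k. split; assumption. }
  destruct Hfar as [eps [Heps Hfar]].
  destruct (choose_escaping _ Hfar) as [psi [Hpsi Hyfar]].
  destruct (bolzano_weierstrass _ (bounded_seq_comp y (fun k => phi (psi k)) By))
    as [b' [chi [Hchi Hy]]].
  assert (Hb' : b' = b).
  { apply Hunique. exists (fun k => phi (psi (chi k))).
    split; [apply (escaping_comp phi (fun k => psi (chi k))); [|apply escaping_comp]; assumption|].
    split; [|exact Hy].
    exact (Un_cv_escaping _ _ _ (Un_cv_escaping _ _ _ Hw Hpsi) Hchi). }
  subst b'. destruct (Hy eps Heps) as [N HN]. apply (Hyfar (chi N)). apply HN. lia.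
Qed.

Fixpoint sumn (F : nat -> R) (m : nat) : R :=
  match m with O => 0 | S m' => sumn F m' + F m' end.

Lemma sumn_ext F G m : (forall k, (k < m)%nat -> F k = G k) -> sumn F m = sumn G m.
Proof. induction m; simpl; intros H; auto. rewrite IHm, H; auto. Qed.

Lemma sumn_zero F m : (forall k, (k < m)%nat -> F k = 0) -> sumn F m = 0.
Proof. induction m; simpl; intros H; auto. rewrite IHm, H; auto. ring. Qed.

Lemma sumn_minus F G m : sumn (fun k => F k - G k) m = sumn F m - sumn G m.
Proof. induction m; simpl; [ring|]. rewrite IHm; ring. Qed.

Lemma sumn_scal F a m : sumn (fun k => F k * a) m = sumn F m * a.
Proof. induction m; simpl; [ring|]. rewrite IHm; ring. Qed.

Lemma sumn_sum_f_R0 F n : sum_f_R0 F n = sumn F (S n).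
Proof. induction n; simpl; [ring|]. rewrite IHn. simpl. ring. Qed.

Lemma Un_cv_sumn (c : nat -> R) (u : nat -> nat -> R) (l : nat -> R) m :
  (forall i, (i < m)%nat -> Un_cv (u i) (l i)) ->
  Un_cv (fun k => sumn (fun i => c i * u i k) m) (sumn (fun i => c i * l i) m).
Proof.
  induction m as [|m IH]; intros Hu; simpl; [apply Un_cv_const|].
  apply CV_plus; [apply IH; auto|].
  apply CV_mult; [apply Un_cv_const|apply Hu; lia].
Qed.

Definition skip (i0 k : nat) : nat := if (k <? i0)%nat then k else S k.
Definition unskip (i0 i : nat) : nat := if (i <? i0)%nat then i else pred i.

Lemma skip_neq i0 k : skip i0 k <> i0.
Proof. unfold skip. destruct (Nat.ltb_spec k i0); lia. Qed.

Lemma unskip_skip i0 k : unskip i0 (skip i0 k) = k.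
Proof.
  unfold skip, unskip. destruct (Nat.ltb_spec k i0).
  - destruct (Nat.ltb_spec k i0); lia.
  - destruct (Nat.ltb_spec (S k) i0); simpl; lia.
Qed.

Lemma sumn_skip F m i0 : (i0 < S m)%nat ->
  sumn F (S m) = F i0 + sumn (fun k => F (skip i0 k)) m.
Proof.
  revert i0. induction m as [|m IH]; intros i0 Hi.
  - simpl. replace i0 with 0%nat by lia. ring.
  - change (sumn F (S (S m))) with (sumn F (S m) + F (S m)).
    destruct (Nat.eq_dec i0 (S m)) as [->|Hne].
    + rewrite (sumn_ext (fun k => F (skip (S m) k)) F); [ring|].
      intros k Hk. unfold skip. destruct (Nat.ltb_spec k (S m)); [reflexivity|lia].
    + rewrite (IH i0) by lia. simpl.
      replace (skip i0 m) with (S m); [ring|].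
      unfold skip. destruct (Nat.ltb_spec m i0); [lia|reflexivity].
Qed.

(* Gaussian elimination step: eliminating unknown i0 with the pivot v i0 n <> 0 turns a
   nontrivial solution of the reduced system into one of the original system. *)
Lemma pivot_elimination (n m : nat) (v : nat -> nat -> R) (i0 : nat) :
  (i0 < S m)%nat -> v i0 n <> 0 ->
  (exists c, (exists i, (i < m)%nat /\ c i <> 0) /\ forall j, (j < n)%nat ->
     sumn (fun i => c i * (v (skip i0 i) j - v (skip i0 i) n / v i0 n * v i0 j)) m = 0) ->
  exists c, (exists i, (i < S m)%nat /\ c i <> 0) /\
    forall j, (j < S n)%nat -> sumn (fun i => c i * v i j) (S m) = 0.
Proof.
  intros Hi0 Hpiv [c' [[k0 [Hk0 Hck0]] Hc']].
  set (r := - sumn (fun k => c' k * (v (skip i0 k) n / v i0 n)) m).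
  exists (fun i => if (i =? i0)%nat then r else c' (unskip i0 i)).
  assert (Hlift : forall k, (if (skip i0 k =? i0)%nat then r else c' (unskip i0 (skip i0 k))) = c' k).
  { intros k. rewrite (proj2 (Nat.eqb_neq _ _) (skip_neq i0 k)). apply f_equal, unskip_skip. }
  split.
  - exists (skip i0 k0). split; [unfold skip; destruct (Nat.ltb_spec k0 i0); lia|].
    rewrite Hlift. exact Hck0.
  - intros j Hj. rewrite (sumn_skip _ m i0 Hi0), Nat.eqb_refl.
    rewrite (sumn_ext _ (fun k => c' k * v (skip i0 k) j)) by (intros k _; rewrite Hlift; reflexivity).
    destruct (Nat.eq_dec j n) as [->|Hjn].
    + assert (E : sumn (fun k => c' k * (v (skip i0 k) n / v i0 n)) m * v i0 n
                  = sumn (fun k => c' k * v (skip i0 k) n) m).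
      { rewrite <- sumn_scal. apply sumn_ext. intros k _. field. exact Hpiv. }
      unfold r. rewrite <- E. ring.
    + assert (E : sumn (fun k => c' k * (v (skip i0 k) j - v (skip i0 k) n / v i0 n * v i0 j)) m
                  = sumn (fun k => c' k * v (skip i0 k) j) m
                    - sumn (fun k => c' k * (v (skip i0 k) n / v i0 n)) m * v i0 j).
      { rewrite <- sumn_scal, <- sumn_minus. apply sumn_ext. intros k _. ring. }
      specialize (Hc' j ltac:(lia)). rewrite E in Hc'. unfold r. lra.
Qed.

Lemma homogeneous_system_solution (n : nat) :
  forall (m : nat) (v : nat -> nat -> R), (n < m)%nat ->
  exists c, (exists i, (i < m)%nat /\ c i <> 0) /\
    forall j, (j < n)%nat -> sumn (fun i => c i * v i j) m = 0.
Proof.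
  induction n as [|n IH]; intros m v Hm.
  - exists (fun _ => 1). split; [exists 0%nat; split; [lia|lra]|]. intros j Hj. lia.
  - destruct m as [|m]; [lia|].
    destruct (classic (exists i0, (i0 < S m)%nat /\ v i0 n <> 0)) as [[i0 [Hi0 Hpiv]]|Hnopiv].
    + apply (pivot_elimination n m v i0 Hi0 Hpiv). apply IH. lia.
    + destruct (IH (S m) v ltac:(lia)) as [c [Hnz Hc]].
      exists c. split; [exact Hnz|]. intros j Hj. destruct (Nat.eq_dec j n) as [->|Hjn].
      * apply sumn_zero. intros k Hk. destruct (Req_dec (v k n) 0) as [->|Hvk]; [ring|].
        exfalso. apply Hnopiv. exists k. split; assumption.
      * apply Hc. lia.
Qed.

Definition decide (P : Prop) : bool := if excluded_middle_informative P then true else false.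

Lemma decide_true P : decide P = true <-> P.
Proof. unfold decide. destruct (excluded_middle_informative P); split; intros; auto; discriminate. Qed.

Lemma decide_false P : negb (decide P) = true <-> ~ P.
Proof.
  unfold decide. destruct (excluded_middle_informative P); simpl; split; intros; auto;
    try discriminate; tauto.
Qed.

Definition eq_dec {T : Type} (x y : T) : {x = y} + {x <> y} := excluded_middle_informative (x = y).

Lemma finite_listing {T : Type} (P : T -> Prop) (l : list T) :
  (forall z, P z -> In z l) -> exists l', NoDup l' /\ forall z, P z <-> In z l'.
Proof.
  intros H. exists (nodup eq_dec (filter (fun z => decide (P z)) l)). split; [apply NoDup_nodup|].
  intros z. rewrite nodup_In, filter_In, decide_true. firstorder.
Qed.

Lemma card_exists (P : R -> Prop) (l : list R) :
  (forall z, P z -> In z l) -> exists m, set_card_eq P m.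
Proof. intros H. destruct (finite_listing P l H) as [l' [Hl' Hin]]. exists (length l'), l'. auto. Qed.

Lemma card_le (P Q : R -> Prop) m k : set_card_eq P m -> set_card_eq Q k ->
  (forall z, P z -> Q z) -> (m <= k)%nat.
Proof.
  intros [l [Hl [<- HPl]]] [l' [Hl' [<- HQl]]] H.
  apply NoDup_incl_length; [exact Hl|]. intros z Hz. apply HQl, H, HPl, Hz.
Qed.

Lemma card_unique (P : R -> Prop) m k : set_card_eq P m -> set_card_eq P k -> m = k.
Proof.
  intros Hm Hk. pose proof (card_le P P m k Hm Hk (fun z h => h)).
  pose proof (card_le P P k m Hk Hm (fun z h => h)). lia.
Qed.

Lemma card_ext (P Q : R -> Prop) k : (forall z, P z <-> Q z) -> set_card_eq P k -> set_card_eq Q k.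
Proof.
  intros H [l [Hl [Hlen HP]]]. exists l. split; [exact Hl|]. split; [exact Hlen|].
  intros r. rewrite <- H. apply HP.
Qed.

Lemma card_singleton (a : R) : set_card_eq (fun r => r = a) 1.
Proof.
  exists (a :: nil). split; [constructor; [simpl; tauto|constructor]|]. split; [reflexivity|].
  intros r. simpl. split; [intros ->; left; reflexivity|intros [->|[]]; reflexivity].
Qed.

Definition injective_on {T U : Type} (g : T -> U) (s : list T) : Prop :=
  forall q q', In q s -> In q' s -> g q = g q' -> q = q'.

Definition image {T : Type} (g : T -> R) (s : list T) : R -> Prop :=
  fun c => exists q, In q s /\ c = g q.

Lemma NoDup_map_injective_on {T U : Type} (g : T -> U) (s : list T) :
  NoDup s -> injective_on g s -> NoDup (map g s).
Proof.
  induction s as [|a s IH]; simpl; intros Hn Hi; constructor; inversion Hn; subst.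
  - intros Hin. apply in_map_iff in Hin. destruct Hin as [q [Hq Hqs]].
    assert (q = a) by (apply Hi; simpl; auto). subst. tauto.
  - apply IH; auto. intros q q' Hq Hq' Hg. apply Hi; simpl; auto.
Qed.

Lemma image_card_exists {T : Type} (g : T -> R) (s : list T) : exists k, set_card_eq (image g s) k.
Proof. apply (card_exists _ (map g s)). intros z [q [Hq ->]]. apply in_map, Hq. Qed.

Lemma image_card_le {T : Type} (g : T -> R) s k : set_card_eq (image g s) k -> (k <= length s)%nat.
Proof.
  intros [l [Hl [<- Hin]]]. rewrite <- (length_map g s). apply NoDup_incl_length; [exact Hl|].
  intros z Hz. apply Hin in Hz. destruct Hz as [q [Hq ->]]. apply in_map, Hq.
Qed.

Lemma image_card_ge {T : Type} (g : T -> R) s s' k : set_card_eq (image g s) k ->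
  NoDup s' -> incl s' s -> injective_on g s' -> (length s' <= k)%nat.
Proof.
  intros [l [Hl [<- Hin]]] Hn Hinc Hinj. rewrite <- (length_map g s').
  apply NoDup_incl_length; [apply NoDup_map_injective_on; assumption|].
  intros z Hz. apply in_map_iff in Hz. destruct Hz as [q [<- Hq]]. apply Hin. exists q. auto.
Qed.

Lemma image_card_lt {T : Type} (g : T -> R) s k q q' : set_card_eq (image g s) k ->
  NoDup s -> In q s -> In q' s -> q <> q' -> g q = g q' -> (k < length s)%nat.
Proof.
  intros [l [Hl [<- Hin]]] Hn Hq Hq' Hne Hg.
  apply Nat.le_lt_trans with (length (map g (remove eq_dec q s))).
  - apply NoDup_incl_length; [exact Hl|]. intros z Hz. apply Hin in Hz. destruct Hz as [r [Hr ->]].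
    destruct (eq_dec r q) as [->|Hrq]; [rewrite Hg|]; apply in_map, in_in_remove; auto.
  - rewrite length_map. apply remove_length_lt. exact Hq.
Qed.

Definition proj (t : R) (q : R * R) : R := fst q + t * snd q.

Definition slope (q q' : R * R) : R := (fst q' - fst q) / (snd q - snd q').

Lemma proj_collision t q q' : q <> q' -> proj t q = proj t q' -> snd q <> snd q' /\ t = slope q q'.
Proof.
  destruct q as [a b], q' as [a' b']. unfold proj, slope. simpl. intros Hne Heq.
  destruct (Req_dec b b') as [->|Hb].
  - exfalso. apply Hne. f_equal. lra.
  - split; [exact Hb|]. field_simplify_eq; lra.
Qed.

Lemma proj_slope q q' : snd q <> snd q' -> proj (slope q q') q = proj (slope q q') q'.
Proof. destruct q as [a b], q' as [a' b']. unfold proj, slope. simpl. intros Hb. field. lra. Qed.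

Definition slopes (s : list (R * R)) : list R :=
  map (fun pq => slope (fst pq) (snd pq))
      (filter (fun pq => negb (decide (snd (fst pq) = snd (snd pq)))) (list_prod s s)).

Lemma in_slopes s q q' : In q s -> In q' s -> snd q <> snd q' -> In (slope q q') (slopes s).
Proof.
  intros Hq Hq' Hb. unfold slopes. apply (in_map (fun pq => slope (fst pq) (snd pq)) _ (q, q')).
  apply filter_In. split; [apply in_prod; assumption|]. apply decide_false. exact Hb.
Qed.

Lemma slopes_in s t : In t (slopes s) ->
  exists q q', In q s /\ In q' s /\ snd q <> snd q' /\ t = slope q q'.
Proof.
  unfold slopes. intros Ht. apply in_map_iff in Ht. destruct Ht as [[q q'] [<- Hin]].
  apply filter_In in Hin. destruct Hin as [Hin Hb]. apply in_prod_iff in Hin.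
  apply (proj1 (decide_false _)) in Hb. exists q, q'. simpl. tauto.
Qed.

Lemma proj_generic s : injective_on (proj (MaxRlist (slopes s) + 1)) s.
Proof.
  intros q q' Hq Hq' Hg. destruct (eq_dec q q') as [|Hne]; [assumption|].
  destruct (proj_collision _ _ _ Hne Hg) as [Hb Ht].
  pose proof (MaxRlist_P1 _ _ (in_slopes s q q' Hq Hq' Hb)). lra.
Qed.

Definition row_max (s : list (R * R)) (q : R * R) : Prop :=
  forall a', In (a', snd q) s -> a' <= fst q.

Lemma row_max_count s (ly : list R) : NoDup s -> (forall q, In q s -> In (snd q) ly) ->
  (length (filter (fun q => decide (row_max s q)) s) <= length ly)%nat.
Proof.
  intros Hs Hly. rewrite <- (length_map snd). apply NoDup_incl_length.
  - apply NoDup_map_injective_on; [apply NoDup_filter, Hs|].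
    intros [a b] [a' b'] Hr Hr' Hsnd. apply filter_In in Hr, Hr'.
    destruct Hr as [Hr Hm], Hr' as [Hr' Hm']. apply (proj1 (decide_true _)) in Hm, Hm'.
    simpl in Hsnd. subst b'. specialize (Hm a' Hr'). specialize (Hm' a Hr). simpl in *.
    f_equal. lra.
  - intros b Hb. apply in_map_iff in Hb. destruct Hb as [q [<- Hq]].
    apply filter_In in Hq. apply Hly, Hq.
Qed.

Lemma proj_max_slope_injective s :
  injective_on (proj (MaxRlist (slopes s))) (filter (fun q => negb (decide (row_max s q))) s).
Proof.
  intros [a b] [a' b'] Hr Hr' Hg. apply filter_In in Hr, Hr'.
  destruct Hr as [Hr Hm], Hr' as [Hr' Hm']. apply (proj1 (decide_false _)) in Hm, Hm'.
  destruct (eq_dec (a, b) (a', b')) as [|Hne]; [assumption|]. exfalso.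
  destruct (proj_collision _ _ _ Hne Hg) as [Hb Ht]. unfold slope in Ht. simpl in Hb, Ht.
  destruct (Rlt_or_le b b') as [Hlt|Hle].
  - apply Hm. intros a'' Ha''. apply Rnot_lt_le. intros Hgt. simpl in Ha'', Hgt.
    pose proof (MaxRlist_P1 _ _ (in_slopes s (a'', b) (a', b') Ha'' Hr' Hb)) as Hmax.
    unfold slope in Hmax. simpl in Hmax.
    assert ((a' - a) / (b - b') < (a' - a'') / (b - b')).
    { unfold Rdiv. rewrite (Rmult_comm (a' - a)), (Rmult_comm (a' - a'')).
      apply Rmult_lt_gt_compat_neg_l; [apply Rinv_lt_0_compat|]; lra. }
    lra.
  - apply Hm'. intros a'' Ha''. apply Rnot_lt_le. intros Hgt. simpl in Ha'', Hgt.
    pose proof (MaxRlist_P1 _ _ (in_slopes s (a, b) (a'', b') Hr Ha'' Hb)) as Hmax.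
    unfold slope in Hmax. simpl in Hmax.
    assert ((a' - a) / (b - b') < (a'' - a) / (b - b')).
    { apply Rmult_lt_compat_r; [apply Rinv_0_lt_compat|]; lra. }
    lra.
Qed.

Lemma projection_gap (s : list (R * R)) (ly : list R) : NoDup s ->
  (forall q, In q s -> In (snd q) ly) -> (exists q q', In q s /\ In q' s /\ snd q <> snd q') ->
  exists t1 t2 k1 k2, set_card_eq (image (proj t1) s) k1 /\ set_card_eq (image (proj t2) s) k2 /\
    k1 = length s /\ (k2 < k1)%nat /\ (k1 <= k2 + length ly)%nat.
Proof.
  intros Hs Hly [q0 [q0' [Hq0 [Hq0' Hb0]]]].
  set (t2 := MaxRlist (slopes s)).
  destruct (image_card_exists (proj (t2 + 1)) s) as [k1 Hk1].
  destruct (image_card_exists (proj t2) s) as [k2 Hk2].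
  exists (t2 + 1), t2, k1, k2.
  assert (Hk1s : k1 = length s).
  { pose proof (image_card_le _ _ _ Hk1).
    pose proof (image_card_ge _ _ s _ Hk1 Hs (incl_refl s) (proj_generic s)). lia. }
  assert (Hcollide : (k2 < length s)%nat).
  { destruct (slopes_in s t2) as [q [q' [Hq [Hq' [Hb Ht]]]]].
    { apply MaxRlist_P2. exists (slope q0 q0'). apply in_slopes; assumption. }
    apply (image_card_lt _ _ _ q q' Hk2 Hs Hq Hq').
    - intros ->. apply Hb. reflexivity.
    - rewrite Ht. apply proj_slope, Hb. }
  assert (Hinj : (length (filter (fun q => negb (decide (row_max s q))) s) <= k2)%nat).
  { apply (image_card_ge _ s _ _ Hk2); [apply NoDup_filter, Hs| |apply proj_max_slope_injective].
    intros q Hq. apply filter_In in Hq. apply Hq. }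
  pose proof (filter_length (fun q => decide (row_max s q)) s).
  pose proof (row_max_count s ly Hs Hly).
  split; [exact Hk1|]. split; [exact Hk2|]. repeat split; lia.
Qed.

Lemma cluster_comb_card x y s t k : bounded_seq x -> bounded_seq y ->
  (forall a b, cluster2 x y a b <-> In (a, b) s) ->
  set_card_eq (image (proj t) s) k -> set_card_eq (cluster (comb x y t)) k.
Proof.
  intros Bx By Hs. apply card_ext. intros c. rewrite cluster_comb by assumption. split.
  - intros [[a b] [Hq ->]]. exists a, b. split; [apply Hs, Hq|reflexivity].
  - intros [a [b [Hab ->]]]. exists (a, b). split; [apply Hs, Hab|reflexivity].
Qed.

Lemma cluster_fst_card x y s n : bounded_seq y ->
  (forall a b, cluster2 x y a b <-> In (a, b) s) ->
  set_card_eq (cluster x) n -> set_card_eq (image fst s) n.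
Proof.
  intros By Hs. apply card_ext. intros a. split.
  - intros Ha. destruct (cluster2_extend x y a By Ha) as [b Hab].
    exists (a, b). split; [apply Hs, Hab|reflexivity].
  - intros [[a' b] [Hq ->]]. apply Hs in Hq. exact (cluster2_l _ _ _ _ Hq).
Qed.

Lemma infinite_dimensional_nonzero (V : (nat -> R) -> Prop) :
  infinite_dimensional V -> exists u, V u /\ u <> zero_seq.
Proof.
  intros Hinf. destruct (Hinf 1%nat) as [f [Hf Hli]].
  exists (f 0%nat). split; [apply Hf; lia|]. intros E.
  assert (Hzero : forall n, sum_f_R0 (fun i => 1 * f i n) (pred 1) = 0).
  { intros n. simpl. rewrite E. unfold zero_seq. ring. }
  pose proof (Hli (fun _ => 1) Hzero 0%nat ltac:(lia)). lra.
Qed.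

Lemma bounded_nat_max (P : nat -> Prop) (N : nat) : (exists n, P n) ->
  (forall n, P n -> (n < N)%nat) -> exists n, P n /\ forall m, P m -> (m <= n)%nat.
Proof.
  induction N as [|N IH]; intros [n0 Hn0] Hb.
  - specialize (Hb n0 Hn0). lia.
  - destruct (classic (P N)) as [HN|HN].
    + exists N. split; [exact HN|]. intros m Hm. specialize (Hb m Hm). lia.
    + apply IH; [exists n0; exact Hn0|]. intros m Hm. specialize (Hb m Hm).
      destruct (Nat.eq_dec m N) as [->|]; [contradiction|lia].
Qed.

Lemma pigeonhole_gap (P : nat -> nat -> Prop) (p : nat) :
  (forall N, exists a k, (N <= a)%nat /\ (1 <= k <= p)%nat /\ P a k) ->
  exists k, (1 <= k)%nat /\ forall N, exists a, (N <= a)%nat /\ P a k.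
Proof.
  induction p as [|p IH]; intros H.
  - destruct (H 0%nat) as [a [k [_ [Hk _]]]]. lia.
  - destruct (classic (forall N, exists a, (N <= a)%nat /\ P a (S p))) as [Hlast|Hlast].
    + exists (S p). split; [lia|exact Hlast].
    + apply not_all_ex_not in Hlast. destruct Hlast as [N0 HN0].
      apply IH. intros N. destruct (H (Nat.max N N0)) as [a [k [Ha [Hk HP]]]].
      exists a, k. split; [lia|]. split; [|exact HP].
      destruct (Nat.eq_dec k (S p)) as [->|Hne]; [|lia].
      exfalso. apply HN0. exists a. split; [lia|exact HP].
Qed.

Section LineableSubspace.

Variable A : nat -> Prop.
Hypothesis A_no1 : ~ A 1%nat.
Variable V : (nat -> R) -> Prop.
Hypothesis V_subspace : linear_subspace V.
Hypothesis V_in_L : forall x, V x -> L_of A x \/ x = zero_seq.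

Lemma V_bounded x : V x -> bounded_seq x.
Proof.
  intros Hx. destruct (V_in_L x Hx) as [[Bx _]| ->]; [exact Bx|].
  exists 0. intros n. unfold zero_seq. rewrite Rabs_R0. lra.
Qed.

Lemma V_comb x y t : V x -> V y -> V (comb x y t).
Proof.
  destruct V_subspace as [_ [Hadd Hscal]]. intros Hx Hy.
  apply (Hadd x (fun n => t * y n)); [exact Hx|apply Hscal, Hy].
Qed.

Lemma V_sumn (f : nat -> nat -> R) (c : nat -> R) m : (forall i, (i < m)%nat -> V (f i)) ->
  V (fun k => sumn (fun i => c i * f i k) m).
Proof.
  destruct V_subspace as [H0 [Hadd Hscal]]. induction m as [|m IH]; intros Hf; [exact H0|].
  apply (Hadd (fun k => sumn (fun i => c i * f i k) m) (fun k => c m * f m k)).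
  - apply IH. intros i Hi. apply Hf. lia.
  - apply Hscal, Hf. lia.
Qed.

Lemma V_cluster_finite z : V z -> exists l, forall a, cluster z a -> In a l.
Proof.
  intros Hz. destruct (V_in_L z Hz) as [[_ [m [_ [l [_ [_ Hin]]]]]]| ->].
  - exists l. intros a Ha. apply Hin, accumulation_point_cluster, Ha.
  - exists (0 :: nil). intros a Ha. apply cluster_zero_seq in Ha. left. auto.
Qed.

Lemma V_cluster_card z : V z -> z <> zero_seq ->
  exists l, NoDup l /\ (forall a, cluster z a <-> In a l) /\ A (length l) /\ (2 <= length l)%nat.
Proof.
  intros Hz Hnz. destruct (V_in_L z Hz) as [[Bz [m [Hm [l [Hl [Hlen Hin]]]]]]|]; [|contradiction].
  assert (Hcl : forall a, cluster z a <-> In a l).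
  { intros a. rewrite <- accumulation_point_cluster. apply Hin. }
  subst m. exists l. split; [exact Hl|]. split; [exact Hcl|]. split; [exact Hm|].
  destruct (cluster_exists z Bz) as [a Ha]. apply Hcl in Ha.
  destruct l as [|b [|c l]]; [destruct Ha|contradiction|simpl; lia].
Qed.

Lemma V_nonzero_card z k : V z -> z <> zero_seq -> set_card_eq (cluster z) k ->
  A k /\ (2 <= k)%nat.
Proof.
  intros Hz Hnz Hk. destruct (V_cluster_card z Hz Hnz) as [l [Hl [Hin HAl]]].
  replace k with (length l); [exact HAl|]. apply (card_unique (cluster z)); [|exact Hk].
  exists l. auto.
Qed.

Lemma V_card_in_A z k : V z -> set_card_eq (cluster z) k -> (2 <= k)%nat -> z <> zero_seq /\ A k.
Proof.
  intros Hz Hk H2.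
  assert (Hnz : z <> zero_seq).
  { intros ->. pose proof (card_le _ _ _ _ Hk (card_singleton 0) cluster_zero_seq). lia. }
  split; [exact Hnz|]. exact (proj1 (V_nonzero_card z k Hz Hnz Hk)).
Qed.

Lemma V_clusters_zero y : V y -> (forall b, cluster y b -> b = 0) -> y = zero_seq.
Proof.
  intros Hy H. apply NNPP. intros Hnz.
  destruct (V_cluster_card y Hy Hnz) as [l [Hl [Hin [_ H2]]]].
  assert (Hc : set_card_eq (cluster y) (length l)) by (exists l; auto).
  pose proof (card_le _ _ _ _ Hc (card_singleton 0) H). lia.
Qed.

Lemma V_cluster_pairs x y : V x -> V y ->
  exists s, NoDup s /\ forall a b, cluster2 x y a b <-> In (a, b) s.
Proof.
  intros Hx Hy. destruct (V_cluster_finite x Hx) as [lx Hlx]. destruct (V_cluster_finite y Hy) as [ly Hly].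
  destruct (finite_listing (fun q : R * R => cluster2 x y (fst q) (snd q)) (list_prod lx ly))
    as [s [Hs Hin]].
  { intros [a b] H. apply in_prod; [apply Hlx, (cluster2_l _ _ _ _ H)|apply Hly, (cluster2_r _ _ _ _ H)]. }
  exists s. split; [exact Hs|]. intros a b. apply (Hin (a, b)).
Qed.

Section MaximalElement.

Variables (w : nat -> R) (n : nat).
Hypothesis w_in_V : V w.
Hypothesis w_nonzero : w <> zero_seq.
Hypothesis w_card : set_card_eq (cluster w) n.
Hypothesis w_maximal :
  forall z k, V z -> z <> zero_seq -> set_card_eq (cluster z) k -> (k <= n)%nat.

(* Every element y of V is asymptotically a function of w: otherwise some (a, b) and
   (a, b') would both be cluster points of (w, y), and a generic combination w + t y
   would have more than n cluster points. *)
Lemma companion_unique y a b b' : V y -> cluster2 w y a b -> cluster2 w y a b' -> b = b'.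
Proof.
  intros Hy Hb Hb'. apply NNPP. intros Hne.
  pose proof (V_bounded w w_in_V) as Bw. pose proof (V_bounded y Hy) as By.
  destruct (V_cluster_pairs w y w_in_V Hy) as [s [Hs Hin]].
  set (t := MaxRlist (slopes s) + 1).
  destruct (image_card_exists (proj t) s) as [k Hk].
  assert (Hmore : (n < k)%nat).
  { pose proof (image_card_ge _ _ s k Hk Hs (incl_refl s) (proj_generic s)).
    enough (n < length s)%nat by lia.
    apply (image_card_lt fst s n (a, b) (a, b') (cluster_fst_card w y s n By Hin w_card) Hs);
      [apply Hin, Hb|apply Hin, Hb'|congruence|reflexivity]. }
  pose proof (cluster_comb_card w y s t k Bw By Hin Hk) as Hck.
  destruct (V_card_in_A _ k (V_comb w y t w_in_V Hy) Hck) as [Hnz _].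
  - pose proof (V_nonzero_card w n w_in_V w_nonzero w_card). lia.
  - pose proof (w_maximal _ _ (V_comb w y t w_in_V Hy) Hnz Hck). lia.
Qed.

Lemma companion_follows y a : V y -> cluster w a -> exists b, follows w y a b.
Proof.
  intros Hy Ha. destruct (cluster2_extend w y a (V_bounded y Hy) Ha) as [b Hb].
  exists b. apply (unique_companion_follows w y a b (V_bounded y Hy)).
  intros b' Hb'. exact (companion_unique y a b' b Hy Hb' Hb).
Qed.

(* Then V is finite-dimensional: for n + 1 independent f_i, with h_i the function
   attached to f_i by [companion_follows], choose c <> 0 with sum c_i h_i(a) = 0 at the n
   cluster points a of w; then y = sum c_i f_i has 0 as only cluster point, so y = 0. *)
Lemma maximal_element_finite_dimensional : ~ infinite_dimensional V.
Proof.
  intros Hinf. destruct (Hinf (S n)) as [f [Hf Hli]].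
  destruct (V_cluster_card w w_in_V w_nonzero) as [lw [Hlw [Hinw _]]].
  assert (Hn : length lw = n) by (apply (card_unique (cluster w)); [exists lw|]; auto).
  assert (Hh : exists h : nat * R -> R, forall ia, (fst ia < S n)%nat -> cluster w (snd ia) ->
            follows w (f (fst ia)) (snd ia) (h ia)).
  { apply (choice (fun ia b => (fst ia < S n)%nat -> cluster w (snd ia) ->
            follows w (f (fst ia)) (snd ia) b)).
    intros [i a]. simpl.
    destruct (classic ((i < S n)%nat /\ cluster w a)) as [[Hi Ha]|Hno].
    - destruct (companion_follows (f i) a (Hf i Hi) Ha) as [b Hb]. exists b. auto.
    - exists 0. intros Hi Ha. exfalso. auto. }
  destruct Hh as [h Hh].
  destruct (homogeneous_system_solution n (S n) (fun i j => h (i, nth j lw 0)) (Nat.lt_succ_diag_r n))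
    as [c [[i0 [Hi0 Hci0]] Hc]].
  set (y := fun k => sumn (fun i => c i * f i k) (S n)).
  assert (Hy0 : forall b, cluster y b -> b = 0).
  { intros b Hb.
    destruct (cluster2_extend y w b (V_bounded w w_in_V) Hb) as [a [phi [Hphi [Hy Hw]]]].
    assert (Ha : cluster w a) by (exists phi; auto).
    destruct (In_nth lw a 0 (proj1 (Hinw a) Ha)) as [j [Hj Hja]].
    rewrite <- (Hc j) by lia. rewrite Hja.
    apply (UL_sequence (fun k => y (phi k))); [exact Hy|].
    apply (Un_cv_sumn c (fun i k => f i (phi k))). intros i Hi. apply (Hh (i, a)); assumption. }
  assert (Hyz : y = zero_seq).
  { apply V_clusters_zero; [apply V_sumn; intros i Hi; apply Hf, Hi|exact Hy0]. }
  apply Hci0, (Hli c); [|exact Hi0]. intros k. rewrite sumn_sum_f_R0.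
  exact (f_equal (fun g => g k) Hyz).
Qed.

End MaximalElement.

Lemma cluster_count_unbounded : infinite_dimensional V ->
  forall N, exists z k, V z /\ z <> zero_seq /\ set_card_eq (cluster z) k /\ (N <= k)%nat.
Proof.
  intros Hinf N. apply NNPP. intros Hno.
  set (P := fun k => exists z, V z /\ z <> zero_seq /\ set_card_eq (cluster z) k).
  assert (Hbound : forall k, P k -> (k < N)%nat).
  { intros k [z [Hz [Hnz Hk]]]. apply Nat.nle_gt. intros HNk. apply Hno. exists z, k. auto. }
  destruct (infinite_dimensional_nonzero V Hinf) as [u [Hu Hnz]].
  destruct (V_cluster_card u Hu Hnz) as [l [Hl [Hin _]]].
  destruct (bounded_nat_max P N) as [n [[w [Hw [Hwnz Hwn]]] Hmax]]; [|exact Hbound|].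
  { exists (length l), u. repeat split; auto. exists l. auto. }
  apply (maximal_element_finite_dimensional w n Hw Hwnz Hwn); [|exact Hinf].
  intros z k Hz Hznz Hk. apply Hmax. exists z. auto.
Qed.

(* Fix u in V with p cluster points.  For w in V with many cluster points, the planar set
   of cluster points of (w, u) yields, via [projection_gap], two combinations w + t u whose
   numbers of cluster points k2 < k1 <= k2 + p both lie in A. *)
Lemma consecutive_cardinalities u p : infinite_dimensional V -> V u -> u <> zero_seq ->
  set_card_eq (cluster u) p ->
  forall N, exists a k, (N <= a)%nat /\ (1 <= k <= p)%nat /\ A a /\ A (a + k)%nat.
Proof.
  intros Hinf Hu Hunz [lu [Hlu [Hp Hinu]]] N. subst p.
  destruct (cluster_count_unbounded Hinf (N + length lu + 2)) as [w [n [Hw [Hwnz [Hwn HNn]]]]].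
  pose proof (V_bounded w Hw) as Bw. pose proof (V_bounded u Hu) as Bu.
  destruct (V_cluster_pairs w u Hw Hu) as [s [Hs Hin]].
  assert (Hsnd : forall q, In q s -> In (snd q) lu).
  { intros [a b] Hq. apply Hinu. apply Hin in Hq. exact (cluster2_r _ _ _ _ Hq). }
  assert (Hdistinct : exists q q', In q s /\ In q' s /\ snd q <> snd q').
  { destruct (V_nonzero_card u (length lu) Hu Hunz ltac:(exists lu; auto)) as [_ H2].
    destruct lu as [|b1 [|b2 lu']]; simpl in H2; [lia|lia|].
    assert (Hb : b1 <> b2) by (intros ->; inversion Hlu; simpl in *; tauto).
    destruct (cluster2_extend u w b1 Bw (proj2 (Hinu b1) (or_introl eq_refl))) as [a1 H1].
    destruct (cluster2_extend u w b2 Bw (proj2 (Hinu b2) (or_intror (or_introl eq_refl)))) as [a2 H2'].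
    exists (a1, b1), (a2, b2). split; [apply Hin, cluster2_sym, H1|].
    split; [apply Hin, cluster2_sym, H2'|exact Hb]. }
  destruct (projection_gap s lu Hs Hsnd Hdistinct) as [t1 [t2 [k1 [k2 [Hk1 [Hk2 [Hk1s [Hlt Hle]]]]]]]].
  pose proof (image_card_le _ _ _ (cluster_fst_card w u s n Bu Hin Hwn)).
  destruct (V_card_in_A _ k1 (V_comb w u t1 Hw Hu) (cluster_comb_card w u s t1 k1 Bw Bu Hin Hk1))
    as [_ HA1]; [lia|].
  destruct (V_card_in_A _ k2 (V_comb w u t2 Hw Hu) (cluster_comb_card w u s t2 k2 Bw Bu Hin Hk2))
    as [_ HA2]; [lia|].
  exists k2, (k1 - k2)%nat. split; [lia|]. split; [lia|]. split; [exact HA2|].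
  replace (k2 + (k1 - k2))%nat with k1 by lia. exact HA1.
Qed.

End LineableSubspace.

Theorem theorem2p3 (A : nat -> Prop) (hA1 : ~ A 1%nat) :
  lineable (L_of A) ->
  exists k : nat, (1 <= k)%nat /\
    (forall N : nat, exists a : nat, (N <= a)%nat /\ A a /\ A (a + k)%nat).
Proof.
  intros [V [HV [Hinf HVL]]].
  destruct (infinite_dimensional_nonzero V Hinf) as [u [Hu Hunz]].
  destruct (V_cluster_finite A V HVL u Hu) as [l Hl].
  destruct (card_exists (cluster u) l Hl) as [p Hp].
  apply (pigeonhole_gap (fun a k => A a /\ A (a + k)%nat) p).
  exact (consecutive_cardinalities A hA1 V HV HVL u p Hinf Hu Hunz Hp).
Qed.
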